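(* Let $M$ be a matroid of rank $r$ on a finite linearly ordered set $E$. Then $\mathcal U^*(M)$ is an antichain (no member is properly contained in another).
   Context: The graded lexicographic order on $2^E$: $X\prec Y$ if $|X|<|Y|$, or $|X|=|Y|$ and $\min(X\triangle Y)\in X$; for nonempty $\mathcal X\subseteq 2^E$, $\min\mathcal X$ is its $\prec$-smallest member. A set $X$ is $k$-closed in $M$ if $\mathrm{cl}_M(Y)\subseteq X$ for all $Y\subseteq X$ with $|Y|\le k$; $\mathrm{cl}_k(X)$ is the intersection of all $k$-closed sets containing $X$ (for $k<0$ every set is $k$-closed, so $\mathrm{cl}_{-1}(X)=X$). For a flat $F$ of $M$ of rank $k$, $U^*_F=\min\{U : \mathrm{cl}_{k-1}(U)=F\}$. For $0\le k\le r-1$, $\mathcal U^*_k=\{U^*_F : F \text{ a flat of rank } k,\ |U^*_F|>k\}$, and $\mathcal U^*(M)=\bigcup_{k=0}^{r-1}\mathcal U^*_k$. *)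

(* Matroids on E = 'I_n (ground set linearly ordered by the
   natural order on ordinals), given by their family of independent sets. *)
From mathcomp Require Import all_boot all_order all_algebra.
Set Implicit Arguments. Unset Strict Implicit. Unset Printing Implicit Defensive.
Import Order.TTheory GRing.Theory Num.Theory.

Section Matroid.
Variable n : nat.
Notation E := 'I_n.
Variable indep : {set {set E}}.

Definition is_matroid : Prop :=
  [/\ set0 \in indep,
      (forall A B : {set E}, B \in indep -> A \subset B -> A \in indep) &
      (forall A B : {set E}, A \in indep -> B \in indep -> #|A| < #|B| ->
         exists2 e, e \in B :\: A & e |: A \in indep)].

Definition mrank (X : {set E}) : nat := \max_(A in indep | A \subset X) #|A|.

Definition mcl (X : {set E}) : {set E} := [set e | mrank (e |: X) == mrank X].

Definition is_flat (F : {set E}) : bool := mcl F == F.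

(* X is k-closed (k an integer; for k < 0 every set is k-closed) *)
Definition kclosed (k : int) (X : {set E}) : bool :=
  [forall Y : {set E}, ((Y \subset X) && (Posz #|Y| <= k)%R) ==> (mcl Y \subset X)].

Definition clk (k : int) (X : {set E}) : {set E} :=
  \bigcap_(Z : {set E} | kclosed k Z && (X \subset Z)) Z.

End Matroid.

(* graded lexicographic (strict) order: X ≺ Y iff |X| < |Y|, or |X| = |Y| and
   min(X △ Y) ∈ X (which forces X ≠ Y). *)
Definition glex_lt (n : nat) (X Y : {set 'I_n}) : bool :=
  (#|X| < #|Y|) ||
  ((#|X| == #|Y|) &&
   [exists e, (e \in X :\: Y) &&
      [forall f, (f \in (X :\: Y) :|: (Y :\: X)) ==> (val e <= val f)]]).

Definition is_Ustar (n : nat) (indep : {set {set 'I_n}}) (F U : {set 'I_n}) : Prop :=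
  clk indep (Posz (mrank indep F) - 1)%R U = F /\
  forall V : {set 'I_n}, clk indep (Posz (mrank indep F) - 1)%R V = F ->
    V = U \/ glex_lt U V.

Definition in_Ustar (n : nat) (indep : {set {set 'I_n}}) (U : {set 'I_n}) : Prop :=
  exists k : nat, [/\ k < mrank indep setT &
    exists F : {set 'I_n}, [/\ is_flat indep F, mrank indep F = k,
                              is_Ustar indep F U & k < #|U| ]].

From mathcomp Require Import all_boot all_order all_algebra.
From mathcomp Require Import zify.
Set Implicit Arguments. Unset Strict Implicit. Unset Printing Implicit Defensive.
Import Order.TTheory GRing.Theory Num.Theory.

(** Let [U] in [U*_k] (flat [F]) and [V] in [U*_l] (flat [G]) with [U ⊆ V].
  Since [U ⊆ F] has more than [k = r(F)] elements, it contains a circuit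
  [Y + u], with [|Y| <= r(U) <= min(k, l)] and [u ∈ cl(Y)].  If [|Y| < l]
  (resp. [|Y| < k]), removing [u] from [V] (resp. [U]) would not change
  [cl_{l-1}(V)] (resp. [cl_{k-1}(U)]), contradicting minimality; hence
  [k = l = |Y|].  Then [F = cl_{k-1}(U) ⊆ G] are flats of the same rank, so
  [F = G], and the minimality of [V] forces [V ≼ U], i.e. [U = V]. *)

Section UstarAntichain.
Variable n : nat.
Variable indep : {set {set 'I_n}}.

Lemma mrankS (X Y : {set 'I_n}) : X \subset Y -> mrank indep X <= mrank indep Y.
Proof.
move=> XY; apply/bigmax_leqP => A /andP[HA AX].
by apply: leq_bigmax_cond; rewrite HA (subset_trans AX).
Qed.

Lemma card_le_mrank (A X : {set 'I_n}) :
  A \in indep -> A \subset X -> #|A| <= mrank indep X.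
Proof. by move=> HA AX; apply: leq_bigmax_cond; rewrite HA AX. Qed.

Lemma mrank_indep (A : {set 'I_n}) : A \in indep -> mrank indep A = #|A|.
Proof.
move=> HA; apply/eqP; rewrite eqn_leq card_le_mrank // andbT.
by apply/bigmax_leqP => B /andP[_ BA]; apply: subset_leq_card.
Qed.

Lemma mrank_dep (C : {set 'I_n}) :
  set0 \in indep -> C \notin indep -> mrank indep C < #|C|.
Proof.
move=> indep0 Cd; have /set0Pn[c cC] : C != set0 by apply: contraNneq Cd => ->.
have C_gt0 : 0 < #|C| by apply/card_gt0P; exists c.
rewrite -(prednK C_gt0) ltnS; apply/bigmax_leqP => A /andP[HA AC].
rewrite -ltnS prednK //; apply: proper_card.
by rewrite properEneq AC andbT; apply: contraNneq Cd => AC_eq; rewrite -AC_eq.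
Qed.

Lemma subset_clk (a : int) (X : {set 'I_n}) : X \subset clk indep a X.
Proof. by apply/bigcapsP => Z /andP[_]. Qed.

Lemma clk_min (a : int) (X Z : {set 'I_n}) :
  kclosed indep a Z -> X \subset Z -> clk indep a X \subset Z.
Proof. by move=> HZ XZ; apply: bigcap_inf; rewrite HZ XZ. Qed.

Lemma kclosed_clk (a : int) (X : {set 'I_n}) : kclosed indep a (clk indep a X).
Proof.
apply/forallP => Y; apply/implyP => /andP[YX Ya].
apply/bigcapsP => Z /andP[HZ XZ].
move/forallP: (HZ) => /(_ Y) /implyP; apply; rewrite Ya andbT.
exact: subset_trans YX (clk_min HZ XZ).
Qed.

Lemma clkD1 (a : int) (X Y : {set 'I_n}) u :
  u \in X -> Y \subset X :\ u -> (Posz #|Y| <= a)%R -> u \in mcl indep Y ->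
  clk indep a (X :\ u) = clk indep a X.
Proof.
move=> uX YX Ya uY; apply/eqP; rewrite eqEsubset; apply/andP; split.
  apply: clk_min; first exact: kclosed_clk.
  exact: subset_trans (subD1set _ _) (subset_clk _ _).
apply: clk_min; first exact: kclosed_clk.
have sub_clk := subset_clk a (X :\ u).
have mcl_sub : mcl indep Y \subset clk indep a (X :\ u).
  move/forallP/(_ Y)/implyP: (kclosed_clk a (X :\ u)); apply.
  by rewrite Ya (subset_trans YX sub_clk).
apply/subsetP => x xX; have [->|xu] := eqVneq x u; first exact: subsetP mcl_sub u uY.
by apply: (subsetP sub_clk); rewrite in_setD1 xu.
Qed.

Lemma dep_circuit_mcl (X : {set 'I_n}) : set0 \in indep -> X \notin indep ->
  exists u, exists2 Y : {set 'I_n},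
    [/\ u \in X, Y \subset X :\ u & u \in mcl indep Y] & #|Y| <= mrank indep X.
Proof.
move=> indep0 Xd.
have [C /minsetP[Cd Cmin] CX] := @minset_exists _ [pred C | C \notin indep] X Xd.
have rC := mrank_dep indep0 Cd.
have /set0Pn[u uC] : C != set0 by apply: contraNneq Cd => ->.
have Yi : C :\ u \in indep.
  apply/negPn/negP => Yd; have /setP/(_ u) := Cmin _ Yd (subD1set C u).
  by rewrite !inE eqxx uC.
have cardY : #|C :\ u| = #|C|.-1 by rewrite (cardsD1 u C) uC.
exists u; exists (C :\ u); last first.
  by apply: card_le_mrank Yi _; exact: subset_trans (subD1set _ _) CX.
split; [exact: subsetP CX u uC | exact: setSD |].
have := mrankS (subD1set C u); rewrite inE setD1K // (mrank_indep Yi) cardY.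
by move: rC; lia.
Qed.

Lemma glex_lt_subset (U V : {set 'I_n}) : U \subset V -> ~~ glex_lt V U.
Proof.
move=> UV; rewrite /glex_lt negb_or -leqNgt subset_leq_card //=.
apply/andP => [[/eqP VU /existsP[e /andP[eVU _]]]].
have /eqP UeqV : U == V by rewrite eqEcard UV VU leqnn.
by rewrite UeqV setDv inE in eVU.
Qed.

Lemma Ustar_subset (F U : {set 'I_n}) : is_Ustar indep F U -> U \subset F.
Proof. by case=> <- _; apply: subset_clk. Qed.

Lemma Ustar_min (F U V : {set 'I_n}) : is_Ustar indep F U ->
  V \subset U -> clk indep (Posz (mrank indep F) - 1) V = F -> V = U.
Proof.
case=> _ Umin VU /Umin[//|]; apply: contraTeq => _; exact: glex_lt_subset.
Qed.

Lemma Ustar_notin_mcl (F U Y : {set 'I_n}) u : is_Ustar indep F U ->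
  u \in U -> Y \subset U :\ u -> #|Y| < mrank indep F -> u \notin mcl indep Y.
Proof.
move=> UF uU YU Yr; apply/negP => uY.
have Ya : (Posz #|Y| <= Posz (mrank indep F) - 1)%R by lia.
have /setP/(_ u) := Ustar_min UF (subD1set U u) (etrans (clkD1 uU YU Ya uY) UF.1).
by rewrite !inE eqxx uU.
Qed.

Lemma flat_subset_mrank (F G : {set 'I_n}) : is_flat indep F -> F \subset G ->
  mrank indep G <= mrank indep F -> F = G.
Proof.
move=> /eqP flatF FG rG; apply/eqP; rewrite eqEsubset FG /=.
apply/subsetP => g gG; rewrite -flatF inE eqn_leq.
rewrite [_ <= mrank _ (g |: F)]mrankS ?subsetUr // andbT.
by apply: leq_trans rG; apply: mrankS; rewrite subUset sub1set gG FG.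
Qed.

End UstarAntichain.

Theorem lemma5p2 (n : nat) (indep : {set {set 'I_n}}) :
  is_matroid indep ->
  forall U V : {set 'I_n}, in_Ustar indep U -> in_Ustar indep V ->
    U \subset V -> U = V.
Proof.
move=> [indep0 _ _] U V [k [_ [F [flatF rF UF kU]]]] [l [_ [G [_ rG VG _]]]] UV.
have rUk : mrank indep U <= k by rewrite -rF mrankS ?(Ustar_subset UF).
have rUl : mrank indep U <= l.
  by rewrite -rG (leq_trans (mrankS indep UV)) ?mrankS ?(Ustar_subset VG).
have Ud : U \notin indep by apply: contraTN kU => /mrank_indep <-; rewrite -leqNgt.
have [u [Y [uU YU uY] rY]] := dep_circuit_mcl indep0 Ud.
have lY : l <= #|Y|.
  rewrite leqNgt -rG; apply: contraTN uY.
  apply: Ustar_notin_mcl VG (subsetP UV u uU) _.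
  exact: subset_trans YU (setSD _ UV).
have kY : k <= #|Y|.
  by rewrite leqNgt -rF; apply: contraTN uY; exact: Ustar_notin_mcl UF uU YU.
have rFG : mrank indep F = mrank indep G by rewrite rF rG; lia.
have FG : F \subset G.
  rewrite -UF.1 rFG; apply: clk_min (subset_trans UV (Ustar_subset VG)).
  by rewrite -{2}VG.1; apply: kclosed_clk.
have FeqG : F = G by apply: flat_subset_mrank flatF FG _; rewrite rFG.
by apply: Ustar_min VG UV _; rewrite -FeqG; exact: UF.1.
Qed.
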